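(* Let $d\ge 2$, let $P_1,\dots,P_d$ be matrix polynomials with $P_i(x_1,\dots,x_d)=\sum_{i_1=0}^{\tau_1}\cdots\sum_{i_d=0}^{\tau_d}P^{(i)}_{i_1,\dots,i_d}x_1^{i_1}\cdots x_d^{i_d}$, $P^{(i)}_{i_1,\dots,i_d}\in\mathbb{C}^{n_i\times n_i}$, and let $N=\prod_{i=1}^d n_i$. Suppose $(x_1^*,\dots,x_d^* )\in\mathbb{C}^d$ and nonzero $\mathbf{v}_i\in\mathbb{C}^{n_i}$ satisfy $P_i(x_1^*,\dots,x_d^* )\mathbf{v}_i=0$ for all $1\le i\le d$, and set $\mathbf{v}=\mathbf{v}_1\otimes\cdots\otimes\mathbf{v}_d$. Let $V$ be the block vector whose block indexed by $\mathbf{i}=(i_1,\dots,i_{d-1})$, $0\le i_k\le\alpha_k$ (ordered as the block columns of $R$), is $\prod_{k=1}^{d-1}(x_k^* )^{i_k}\mathbf{v}$. Then $V\neq 0$ and $R(x_d^* )V=0$, where $R(x_d)$ is the hidden variable tensor Dixon resultant; i.e. $x_d^*$ is an eigenvalue of $R(x_d)$ with eigenvector $V$.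
   Context: Kronecker block determinant: for a $d\times d$ array $M=(M_{ij})$ with $M_{ij}\in\mathbb{C}^{n_i\times n_i}$ (possibly depending polynomially on variables), $|M|_\otimes=\sum_{\sigma\in S_d}\mathrm{sgn}(\sigma)\,M_{1,\sigma(1)}\otimes\cdots\otimes M_{d,\sigma(d)}$, an $N\times N$ matrix. Tensor Dixon function (with $x_d$ hidden): with variables $s_1,\dots,s_{d-1},t_1,\dots,t_{d-1},x_d$, let $M_{ij}=P_i(t_1,\dots,t_{j-1},s_j,\dots,s_{d-1},x_d)$ for $1\le i,j\le d$, and $f_{\text{Dixon}}=|M|_\otimes/\prod_{i=1}^{d-1}(s_i-t_i)$, a matrix polynomial of degree at most $\alpha_i=i\tau_i-1$ in $s_i$ and at most $\beta_i=(d-i)\tau_i-1$ in $t_i$. Expand $f_{\text{Dixon}}=\sum_{\mathbf{i},\mathbf{j}}A_{\mathbf{i},\mathbf{j}}(x_d)\prod_k s_k^{i_k}\prod_k t_k^{j_k}$ over $0\le i_k\le\alpha_k$, $0\le j_k\le\beta_k$, with $A_{\mathbf{i},\mathbf{j}}(x_d)$ an $N\times N$ matrix polynomial in $x_d$. The hidden variable tensor Dixon resultant $R(x_d)$ is the square block matrix whose block columns (width $N$) are indexed by the $s$-exponents $\mathbf{i}$ and block rows (height $N$) by the $t$-exponents $\mathbf{j}$ (in fixed orderings), with block $(\mathbf{j},\mathbf{i})$ equal to $A_{\mathbf{i},\mathbf{j}}(x_d)$. *)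

From HB Require Import structures.
From mathcomp Require Import all_boot all_order all_algebra all_fingroup.
From mathcomp.real_closed Require Import complex.
From mathcomp Require Import reals.

Set Implicit Arguments.
Unset Strict Implicit.
Unset Printing Implicit Defensive.

Import Order.TTheory GRing.Theory Num.Theory.
Local Open Scope ring_scope.

Section TensorDixon.

Variable R : realType.
Local Notation C := (R[i])%C.

(* Entry (p,q) of a matrix, with natural-number indices (0 outside range). *)
Definition mxe {m n : nat} (A : 'M[C]_(m, n)) (p q : nat) : C :=
  match (insub p : option 'I_m), (insub q : option 'I_n) with
  | Some p', Some q' => A p' q'
  | _, _ => 0
  end.

Variable d : nat.

(* Mixed-radix digit i of the index a of a Kronecker product whose i-th
   factor has size sz i (factor 0 is the most significant one): the standard
   Kronecker (row-major) ordering. *)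
Definition kdigit (sz : 'I_d -> nat) (i : 'I_d) (a : nat) : nat :=
  (a %/ \prod_(k < d | (i < k)%N) sz k) %% sz i.

Definition kronmx (n : 'I_d -> nat) (A : forall i : 'I_d, 'M[C]_(n i)) :
    'M[C]_(\prod_(i < d) n i) :=
  \matrix_(a, b) \prod_(i < d) mxe (A i) (kdigit n i a) (kdigit n i b).

Definition kroncv (n : 'I_d -> nat) (v : forall i : 'I_d, 'cV[C]_(n i)) :
    'cV[C]_(\prod_(i < d) n i) :=
  \col_a \prod_(i < d) mxe (v i) (kdigit n i a) 0.

Definition kdet (n : 'I_d -> nat) (M : forall i j : 'I_d, 'M[C]_(n i)) :
    'M[C]_(\prod_(i < d) n i) :=
  \sum_(s : 'S_d) (-1) ^+ s *: kronmx (fun i => M i (s i)).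

Definition expbox (tau : nat -> nat) := {dffun forall k : 'I_d, 'I_(tau k).+1}.

Definition peval (tau : nat -> nat) (m : nat) (Pc : expbox tau -> 'M[C]_m)
    (x : 'I_d -> C) : 'M[C]_m :=
  \sum_(e : expbox tau) (\prod_(k < d) x k ^+ e k) *: Pc e.

(* The evaluation point of the entry in block column j of the Dixon array
   (0-indexed): variables k < j get t_k, variables j <= k < d-1 get s_k,
   variable d-1 gets the hidden variable xd.  (Coordinate d-1 of s,t unused.) *)
Definition dixpoint (s t : 'I_d -> C) (xd : C) (j : 'I_d) : 'I_d -> C :=
  fun k => if (k : nat) == d.-1 then xd else if (k < j)%N then t k else s k.

(* Block index sets: s-exponents i_k in [0, alpha_k] with alpha_k + 1 = (k+1) tau_k,
   t-exponents j_k in [0, beta_k] with beta_k + 1 = (d-1-k) tau_k, k < d-1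
   (0-indexed version of alpha_k = k tau_k - 1, beta_k = (d-k) tau_k - 1). *)
Definition sexps (tau : nat -> nat) := {dffun forall k : 'I_d.-1, 'I_(k.+1 * tau k)}.
Definition texps (tau : nat -> nat) := {dffun forall k : 'I_d.-1, 'I_((d.-1 - k) * tau k)}.

Definition widd (k : 'I_d.-1) : 'I_d := widen_ord (leq_pred d) k.

Definition stmono (tau : nat -> nat) (s t : 'I_d -> C) (i : sexps tau) (j : texps tau) : C :=
  \prod_(k < d.-1) (s (widd k) ^+ i k * t (widd k) ^+ j k).

(* A is the coefficient family of the tensor Dixon function:
   f_Dixon = |M|_(x) / prod_k (s_k - t_k) = sum_{i,j} A i j (x_d) s^i t^j,
   i.e.  prod_k (s_k - t_k) * sum_{i,j} A i j xd s^i t^j = |M|_(x)  identically. *)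
Definition dixon_coeffs (n : 'I_d -> nat) (tau : nat -> nat)
    (Pc : forall i : 'I_d, expbox tau -> 'M[C]_(n i))
    (A : sexps tau -> texps tau -> C -> 'M[C]_(\prod_(i < d) n i)) : Prop :=
  forall (s t : 'I_d -> C) (xd : C),
    (\prod_(k < d.-1) (s (widd k) - t (widd k))) *:
      (\sum_(i : sexps tau) \sum_(j : texps tau) stmono s t i j *: A i j xd)
    = kdet (fun i j => peval (Pc i) (dixpoint s t xd j)).

(* Hidden variable tensor Dixon resultant R(xd): block (j, i) = A i j xd,
   block rows indexed by t-exponents, block columns by s-exponents
   (both in the enumeration order of the finite index types). *)
Definition dixon_resultant (n : 'I_d -> nat) (tau : nat -> nat)
    (A : sexps tau -> texps tau -> C -> 'M[C]_(\prod_(i < d) n i)) (xd : C) :=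
  \mxblock_(jj < #|texps tau|, ii < #|sexps tau|)
     A (enum_val ii) (enum_val jj) xd.

Definition lastc (x : 'I_d -> C) : C :=
  (match d as m return ('I_m -> C) -> C with
   | 0 => fun _ => 0
   | m.+1 => fun f => f ord_max
   end) x.

Definition dixon_vector (n : 'I_d -> nat) (tau : nat -> nat) (x : 'I_d -> C)
    (v : 'cV[C]_(\prod_(i < d) n i)) :=
  \mxcol_(ii < #|sexps tau|)
     ((\prod_(k < d.-1) x (widd k) ^+ (enum_val ii k)) *: v).

End TensorDixon.

From mathcomp Require Import all_boot all_order all_algebra all_fingroup.
From mathcomp.real_closed Require Import complex.
From mathcomp Require Import reals.
Import GRing.Theory Num.Theory.

Set Implicit Arguments.
Unset Strict Implicit.
Unset Printing Implicit Defensive.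

(* Specialising the defining identity of the Dixon coefficients at s = x*, each
   term of the Kronecker determinant has its factor from block column 1
   evaluated at x* itself, so it kills v = v_1 (x) ... (x) v_d factorwise.
   Hence prod_k (x*_k - t_k) * sum_j t^j (R(x*_d) V)_j = 0 for every t, and as
   the first factor is a nonzero polynomial in t, every block (R(x*_d) V)_j
   vanishes.  V is nonzero because its block of exponent 0 is v. *)

Definition radix_enc D (b f : 'I_D -> nat) : nat :=
  \sum_(i < D) f i * \prod_(k < D | i < k) b k.

Lemma eq_radix_enc D (b f g : 'I_D -> nat) :
  f =1 g -> radix_enc b f = radix_enc b g.
Proof. by move=> fg; apply: eq_bigr => i _; rewrite fg. Qed.

Lemma prodn_gt_ord_recl D (b : 'I_D.+1 -> nat) j :
  \prod_(k < D.+1 | j < k) b k = \prod_(k < D | j <= k) b (lift ord0 k).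
Proof. by rewrite big_mkcond big_ord_recl /= mul1n -big_mkcond. Qed.

Lemma kdigit0 D (b : 'I_D.+1 -> nat) a :
  kdigit b ord0 a = a %/ \prod_(k < D) b (lift ord0 k) %% b ord0.
Proof. by rewrite /kdigit prodn_gt_ord_recl. Qed.

Lemma kdigit_lift0 D (b : 'I_D.+1 -> nat) i a :
  kdigit b (lift ord0 i) a = kdigit (b \o lift ord0) i a.
Proof. by rewrite /kdigit prodn_gt_ord_recl. Qed.

Lemma radix_enc_recl D (b f : 'I_D.+1 -> nat) :
  radix_enc b f = f ord0 * \prod_(k < D) b (lift ord0 k)
                  + radix_enc (b \o lift ord0) (f \o lift ord0).
Proof.
rewrite /radix_enc big_ord_recl prodn_gt_ord_recl.
by congr (_ + _); apply: eq_bigr => i _; rewrite prodn_gt_ord_recl.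
Qed.

Lemma kdigit_modn D (b : 'I_D -> nat) i a :
  kdigit b i (a %% \prod_(k < D) b k) = kdigit b i a.
Proof.
have -> : \prod_(k < D) b k
    = b i * \prod_(k < D | ~~ (i < k) && (k != i)) b k
      * \prod_(k < D | i < k) b k.
  by rewrite (bigID (fun k : 'I_D => i < k)) /= mulnC (bigD1 i) ?ltnn.
by rewrite /kdigit -modn_divl modn_dvdm ?dvdn_mulr.
Qed.

Lemma radix_enc_lt D (b f : 'I_D -> nat) :
  (forall i, f i < b i) -> radix_enc b f < \prod_(i < D) b i.
Proof.
elim: D b f => [|D IH] b f f_lt; first by rewrite /radix_enc !big_ord0.
rewrite radix_enc_recl big_ord_recl.
set P := \prod_(i < D) _.
apply: (@leq_trans (f ord0 * P + P)).
  by rewrite ltn_add2l; exact: IH (fun i => f_lt _).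
by rewrite -mulSnr leq_mul2r f_lt orbT.
Qed.

Lemma kdigit_radix_enc D (b f : 'I_D -> nat) i :
  (forall i, f i < b i) -> kdigit b i (radix_enc b f) = f i.
Proof.
elim: D b f i => [|D IH] b f i f_lt; first by case: i.
have f'_lt k : (f \o lift ord0) k < (b \o lift ord0) k by exact: f_lt.
rewrite radix_enc_recl; have [j ->|->] := unliftP ord0 i.
  by rewrite kdigit_lift0 -kdigit_modn modnMDl kdigit_modn IH.
have P_gt0 : 0 < \prod_(k < D) b (lift ord0 k).
  by apply: prodn_gt0 => k; apply: leq_ltn_trans (f'_lt k).
rewrite kdigit0 divnMDl // divn_small ?addn0 ?modn_small //.
exact: (radix_enc_lt f'_lt).
Qed.

Lemma radix_enc_kdigit D (b : 'I_D -> nat) a :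
  a < \prod_(i < D) b i -> radix_enc b (kdigit b ^~ a) = a.
Proof.
elim: D b a => [|D IH] b a.
  by rewrite big_ord0 /radix_enc big_ord0; case: a.
rewrite big_ord_recl radix_enc_recl kdigit0 => a_lt.
set P := \prod_(i < D) _ in a_lt *.
have P_gt0 : 0 < P by move: a_lt; case: P => //; rewrite muln0.
rewrite modn_small ?ltn_divLR //.
rewrite [RHS](divn_eq a P); congr (_ + _).
rewrite -[RHS](IH (b \o lift ord0)) ?ltn_mod //.
by apply: eq_radix_enc => i; rewrite /= kdigit_lift0 kdigit_modn.
Qed.

Local Open Scope ring_scope.

Lemma sum_kdigits (R : comPzSemiRingType) D (b : 'I_D -> nat)
    (G : 'I_D -> nat -> R) :
  \sum_(a < \prod_(k < D) b k) \prod_(k < D) G k (kdigit b k a)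
    = \prod_(k < D) \sum_(q < b k) G k q.
Proof.
set N := (\prod_(k < D) b k)%N.
have [k /eqP bk0 | b_neq0] := pickP (fun k : 'I_D => b k == 0%N).
  have N0 : N = 0%N by rewrite /N (bigD1 k) //= bk0.
  rewrite [RHS](bigD1 k) //= bk0 big_ord0 mul0r big1 // => a _.
  by have := ltn_ord a; rewrite {2}N0.
have b_gt0 k : (0 < b k)%N by rewrite lt0n b_neq0.
have N_gt0 : (0 < N)%N by exact: prodn_gt0.
have b_le_N k : (b k <= N)%N by rewrite /N (bigD1 k) //= leq_pmulr ?prodn_gt0.
pose a0 := Ordinal N_gt0.
pose enc (f : {ffun 'I_D -> 'I_N}) := insubd a0 (radix_enc b (fun k => f k)).
pose dig (a : 'I_N) : {ffun 'I_D -> 'I_N} :=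
  [ffun k => insubd a0 (kdigit b k a)].
have dig_val a k : val (dig a k) = kdigit b k a.
  by rewrite ffunE val_insubd (leq_trans _ (b_le_N k)) // ltn_mod.
pose digits := family (fun k (q : 'I_N) => q < b k)%N.
have kdigit_enc f k : f \in digits -> kdigit b k (enc f) = f k.
  move=> /familyP f_lt; rewrite val_insubd radix_enc_lt //.
  exact: kdigit_radix_enc.
have dig_enc f : (dig (enc f) == f) = (f \in digits).
  apply/eqP/idP => [<- | f_dig].
    by apply/familyP => k; rewrite -topredE /= dig_val ltn_mod.
  by apply/ffunP => k; apply: val_inj; rewrite dig_val kdigit_enc.
under [RHS]eq_bigr do rewrite (big_ord_widen N (G _) (b_le_N _)).
rewrite bigA_distr_big_dep (reindex_onto enc dig) => [|a _]; last first.
  apply: val_inj; rewrite val_insubd (eq_radix_enc _ (dig_val a)).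
  by rewrite radix_enc_kdigit ltn_ord.
apply: eq_big => f; first by rewrite dig_enc.
by rewrite dig_enc => f_dig; apply: eq_bigr => k _; rewrite kdigit_enc.
Qed.

Section Kronecker.

Variable R : realType.
Local Notation C := R[i]%C.

Lemma mxeE m p (A : 'M[C]_(m, p)) (i : 'I_m) (j : 'I_p) : mxe A i j = A i j.
Proof. by rewrite /mxe !valK. Qed.

Lemma mxe0 m p i j : mxe (0 : 'M[C]_(m, p)) i j = 0.
Proof.
by rewrite /mxe; case: insub => // i'; case: insub => // j'; rewrite mxE.
Qed.

Lemma mxe_mulmx m p q (A : 'M[C]_(m, p)) (B : 'M[C]_(p, q)) i j :
  mxe (A *m B) i j = \sum_(k < p) mxe A i k * mxe B k j.
Proof.
rewrite /mxe; case: insub => [i'|]; last by rewrite big1 // => k _; rewrite mul0r.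
case: insub => [j'|]; last first.
  by rewrite big1 // => k _; case: insub => *; rewrite mulr0.
by rewrite mxE; apply: eq_bigr => k _; rewrite valK.
Qed.

Variables (d : nat) (n : 'I_d -> nat).

Lemma kronmx_mul_kroncv (B : forall i, 'M[C]_(n i))
    (v : forall i, 'cV[C]_(n i)) :
  kronmx B *m kroncv v = kroncv (fun i => B i *m v i).
Proof.
apply/matrixP => a j; rewrite !mxE.
under eq_bigr do rewrite !mxE -big_split /=.
rewrite (sum_kdigits n (fun i q => mxe (B i) (kdigit n i a) q * mxe (v i) q 0)).
by apply: eq_bigr => i _; rewrite mxe_mulmx.
Qed.

Lemma kroncv_eq0 (v : forall i, 'cV[C]_(n i)) i : v i = 0 -> kroncv v = 0.
Proof.
by move=> vi0; apply/matrixP => a j; rewrite !mxE (bigD1 i) //= vi0 mxe0 mul0r.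
Qed.

Lemma kroncv_neq0 (v : forall i, 'cV[C]_(n i)) :
  (forall i, v i != 0) -> kroncv v != 0.
Proof.
move=> v_neq0.
have /fin_all_exists[p v_p] : forall i, exists q : 'I_(n i), v i q 0 != 0.
  by move=> i; have /matrix0Pn[q [j]] := v_neq0 i; rewrite (ord1 j); exists q.
have p_lt i : (p i < n i)%N := ltn_ord (p i).
apply/matrix0Pn; exists (Ordinal (radix_enc_lt p_lt)), 0; rewrite mxE.
by apply/prodf_neq0 => i _; rewrite /= kdigit_radix_enc // (mxeE _ _ ord0).
Qed.

Lemma kdet_mul_kroncv_eq0 (M : forall i j : 'I_d, 'M[C]_(n i))
    (v : forall i, 'cV[C]_(n i)) j :
  (forall i, M i j *m v i = 0) -> kdet M *m kroncv v = 0.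
Proof.
move=> Mv0; rewrite /kdet mulmx_suml; apply: big1 => s _.
rewrite -scalemxAl kronmx_mul_kroncv (@kroncv_eq0 _ ((s^-1)%g j)) ?scaler0 //.
by rewrite permKV.
Qed.

End Kronecker.

Lemma poly_eq0_of_horner (F : numDomainType) (p : {poly F}) :
  (forall x, p.[x] = 0) -> p = 0.
Proof.
move=> p0; apply: (@roots_geq_poly_eq0 _ _ [seq i%:R | i <- iota 0 (size p)]).
- by apply/allP => x _; rewrite /root p0.
- by rewrite map_inj_uniq ?iota_uniq // => i j /eqP; rewrite eqr_nat => /eqP.
- by rewrite size_map size_iota.
Qed.

Lemma coef_eq0_of_prod_sub_mul (F : numDomainType) D (b : 'I_D -> nat)
    (c : {dffun forall k : 'I_D, 'I_(b k)} -> F) (s : 'I_D -> F) :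
  (forall t : 'I_D -> F,
     \prod_(k < D) (s k - t k) * \sum_j c j * \prod_(k < D) t k ^+ j k = 0) ->
  forall j, c j = 0.
Proof.
move=> vanish j0.
have b_gt0 k : (0 < b k)%N := leq_ltn_trans (leq0n _) (ltn_ord (j0 k)).
(* Kronecker substitution t_k = y ^+ w k: the monomial t^j becomes y ^+ e j,
   and e is injective because the w k are mixed-radix weights. *)
pose w k := (\prod_(l < D | k < l) b l)%N.
pose e (j : {dffun forall k : 'I_D, 'I_(b k)}) := radix_enc b (fun k => j k).
have e_inj : injective e.
  move=> j1 j2 e12; apply/ffunP => k; apply: ord_inj.
  rewrite -(kdigit_radix_enc k (fun k => ltn_ord (j1 k))).
  by rewrite -/(e j1) e12 kdigit_radix_enc.
pose g := \prod_(k < D) ((s k)%:P - 'X^(w k)).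
pose p := \sum_j c j *: 'X^(e j).
have g_neq0 : g != 0.
  apply/prodf_neq0 => k _; rewrite -opprB oppr_eq0 monic_neq0 // monicXnsubC //.
  exact: prodn_gt0.
have : g * p = 0.
  apply: poly_eq0_of_horner => y; rewrite hornerM horner_prod horner_sum.
  rewrite -[RHS](vanish (fun k => y ^+ w k)); congr (_ * _).
    by apply: eq_bigr => k _; rewrite hornerD hornerN hornerC hornerXn.
  apply: eq_bigr => j _; rewrite hornerZ hornerXn -prodrXr; congr (_ * _).
  by apply: eq_bigr => k _; rewrite -exprM mulnC.
move=> /eqP; rewrite mulf_eq0 (negPf g_neq0) /= => /eqP /polyP /(_ (e j0)).
rewrite coef0 coef_sumMXn (big_pred1 j0) // => j /=.
by rewrite eq_sym; apply/eqP/eqP => [/e_inj | ->].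
Qed.

Section Dixon.

Variables (R : realType) (d : nat) (n : 'I_d -> nat) (tau : nat -> nat).
Local Notation C := R[i]%C.
Local Notation N := (\prod_(i < d) n i)%N.
Variable A : sexps d tau -> texps d tau -> C -> 'M[C]_N.

Definition resultant_block xd (x : 'I_d -> C) (w : 'cV[C]_N)
    (j : texps d tau) :=
  \sum_(i : sexps d tau)
    A i j xd *m ((\prod_(k < d.-1) x (widd k) ^+ i k) *: w).

Lemma dixon_resultant_mul_vector xd (x : 'I_d -> C) (w : 'cV[C]_N) :
  dixon_resultant A xd *m dixon_vector tau x w
    = \mxcol_(jj < #|texps d tau|) resultant_block xd x w (enum_val jj).
Proof.
rewrite mul_mxblock_mxrow; apply/eq_mxcolP => jj.
have enum_val_on := onW_bij predT (@enum_val_bij (sexps d tau)).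
by rewrite /resultant_block (reindex _ enum_val_on).
Qed.

Lemma dixon_vector_neq0 (x : 'I_d -> C) (w : 'cV[C]_N) :
  (forall k : 'I_d.-1, (0 < tau k)%N) -> w != 0 -> dixon_vector tau x w != 0.
Proof.
move=> tau_gt0 w_neq0.
have k_tau_gt0 (k : 'I_d.-1) : (0 < k.+1 * tau k)%N by rewrite muln_gt0 tau_gt0.
pose z : sexps d tau := [ffun k => Ordinal (k_tau_gt0 k)].
apply: contraNneq w_neq0 => /(congr1 (fun V => submxcol V (enum_rank z))).
rewrite mxcolK submxcol0 enum_rankK [X in X *: _]big1 ?scale1r => [-> //|k _].
by rewrite ffunE expr0.
Qed.

Lemma dixon_sum_mulmx (s t : 'I_d -> C) xd (w : 'cV[C]_N) :
  (\sum_(i : sexps d tau) \sum_(j : texps d tau) stmono s t i j *: A i j xd)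
    *m w
    = \sum_(j : texps d tau)
        (\prod_(k < d.-1) t (widd k) ^+ j k) *: resultant_block xd s w j.
Proof.
rewrite exchange_big mulmx_suml; apply: eq_bigr => j _.
rewrite mulmx_suml scaler_sumr.
apply: eq_bigr => i _; rewrite -scalemxAl -scalemxAr scalerA /stmono big_split.
by rewrite mulrC.
Qed.

Lemma lastcE (x : 'I_d -> C) (k : 'I_d) : (k : nat) = d.-1 -> lastc x = x k.
Proof.
case: d x k => [|d'] x k; first by case: k.
by move=> k_last; congr (x _); apply: val_inj; rewrite /= k_last.
Qed.

Lemma kdet_dixon_mul_kroncv_eq0
    (Pc : forall i : 'I_d, expbox d tau -> 'M[C]_(n i))
    (x t : 'I_d -> C) (v : forall i, 'cV[C]_(n i)) :
  (0 < d)%N -> (forall i, peval (Pc i) x *m v i = 0) ->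
  kdet (fun i j => peval (Pc i) (dixpoint x t (lastc x) j)) *m kroncv v = 0.
Proof.
(* The first block column of the Dixon array is evaluated at s = x, i.e. at x. *)
move=> d_gt0 Pv0; apply: (@kdet_mul_kroncv_eq0 _ _ _ _ _ (Ordinal d_gt0)) => i.
rewrite -[RHS](Pv0 i); congr (_ *m _); apply: eq_bigr => e _.
congr (_ *: _); apply: eq_bigr => k _; rewrite /dixpoint.
by case: eqP => [/lastcE -> | _] //; rewrite ltn0.
Qed.

Lemma resultant_block_eq0 (Pc : forall i : 'I_d, expbox d tau -> 'M[C]_(n i))
    (x : 'I_d -> C) (v : forall i, 'cV[C]_(n i)) :
  (0 < d)%N -> (forall i, peval (Pc i) x *m v i = 0) -> dixon_coeffs Pc A ->
  forall j, resultant_block (lastc x) x (kroncv v) j = 0.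
Proof.
move=> d_gt0 Pv0 hA j; apply/matrixP => r c; rewrite (ord1 c) [RHS]mxE.
pose W j := resultant_block (lastc x) x (kroncv v) j r 0.
apply: (@coef_eq0_of_prod_sub_mul _ _ _ W (x \o @widd d)) => t.
pose tt (k : 'I_d) := oapp t 0 (insub (val k)).
have ttE k : tt (widd k) = t k by rewrite /tt /widd /= valK.
have := congr1 (mulmx^~ (kroncv v)) (hA x tt (lastc x)).
rewrite kdet_dixon_mul_kroncv_eq0 // -scalemxAl dixon_sum_mulmx.
move=> /matrixP /(_ r 0); rewrite !mxE summxE => vanish.
rewrite -[RHS]vanish; congr (_ * _).
  by apply: eq_bigr => k _; rewrite ttE.
apply: eq_bigr => j' _; rewrite !mxE mulrC; congr (_ * _).
by apply: eq_bigr => k _; rewrite ttE.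
Qed.

End Dixon.

Theorem proposition4p2 (R : realType) (d : nat) (hd : (2 <= d)%N)
    (n : 'I_d -> nat) (tau : nat -> nat)
    (htau : forall k : 'I_d.-1, (0 < tau k)%N)
    (Pc : forall i : 'I_d, expbox d tau -> 'M[R[i]%C]_(n i))
    (x : 'I_d -> R[i]%C) (v : forall i : 'I_d, 'cV[R[i]%C]_(n i))
    (A : sexps d tau -> texps d tau -> R[i]%C -> 'M[R[i]%C]_(\prod_(i < d) n i)) :
  (forall i : 'I_d, v i != 0) ->
  (forall i : 'I_d, peval (Pc i) x *m v i = 0) ->
  dixon_coeffs Pc A ->
  let V := dixon_vector tau x (kroncv v) in
  V != 0 /\ dixon_resultant A (lastc x) *m V = 0.
Proof.
move=> v_neq0 Pv0 hA V; split; first exact/dixon_vector_neq0/kroncv_neq0.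
rewrite dixon_resultant_mul_vector.
under eq_mxcol do rewrite (resultant_block_eq0 (ltnW hd) Pv0 hA).
exact: mxcol0.
Qed.
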